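(* Let $\Delta=\delta_x\times\delta_y$ with $x_k=y_k=k/10$, $k=0,\dots,10$, and define $\langle A\rangle,\langle B\rangle:\Delta\to\mathbb{R}$ by $\langle A\rangle(j/10,k/10)=[A]_{j+1,k+1}$, $\langle B\rangle(j/10,k/10)=[B]_{j+1,k+1}$ ($j,k=0,\dots,10$), where $$[A]=\tfrac{1}{50}\begin{bmatrix} 0&0&0&0&0&0&0&0&0&0&0\\ 0&0&1&2&3&4&5&5&5&5&5\\ 0&1&2&3&3&4&5&10&10&10&10\\ 0&2&2&5&7&7&8&13&15&15&15\\ 0&3&3&6&7&7&8&13&18&20&20\\ 0&4&4&6&9&11&11&16&21&25&25\\ 0&5&5&7&9&11&11&16&21&26&30\\ 0&5&10&12&14&16&16&21&26&31&35\\ 0&5&10&15&19&21&21&26&31&36&40\\ 0&5&10&15&20&25&26&31&36&41&45\\ 0&5&10&15&20&25&30&35&40&45&50 \end{bmatrix},\quad [B]=\tfrac{1}{50}\begin{bmatrix} 0&0&0&0&0&0&0&0&0&0&0\\ 0&1&2&3&4&5&5&5&5&5&5\\ 0&2&2&3&4&5&6&10&10&10&10\\ 0&3&3&6&7&8&9&14&15&15&15\\ 0&4&4&6&8&8&9&14&18&20&20\\ 0&5&5&7&9&11&12&17&22&25&25\\ 0&5&6&8&10&12&12&17&22&26&30\\ 0&5&10&13&15&17&17&22&27&31&35\\ 0&5&10&15&19&21&22&27&32&36&40\\ 0&5&10&15&20&25&26&31&36&41&45\\ 0&5&10&15&20&25&30&35&40&45&50 \end{bmatrix}.$$ Then $\langle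 A\rangle$ is a discrete quasi-copula, $\langle B\rangle=\langle A\rangle_M$, $(\langle A\rangle,\langle B\rangle)$ is a discrete imprecise copula, and there is no discrete copula $C$ on $\Delta$ with $\langle A\rangle\le C\le\langle B\rangle$. Consequently $(\langle A\rangle^{\mathrm{BL}},\langle B\rangle^{\mathrm{BL}})$ is an imprecise copula on $[0,1]^2$ for which no copula $C$ satisfies $\langle A\rangle^{\mathrm{BL}}\le C\le\langle B\rangle^{\mathrm{BL}}$.
   Context: All points and rectangle corners are in the mesh $\Delta$ unless stated otherwise. For $Q:\Delta\to\mathbb{R}$, $V_Q([s_1,s_2]\times[t_1,t_2])=Q(s_1,t_1)+Q(s_2,t_2)-Q(s_2,t_1)-Q(s_1,t_2)$. Discrete copula: grounded ($Q(x,0)=Q(0,y)=0$), neutral element 1 ($Q(x,1)=x$, $Q(1,y)=y$), $V_Q\ge0$ on all rectangles with corners in $\Delta$; discrete quasi-copula: grounded, neutral element 1, $V_Q\ge0$ on rectangles with corners in $\Delta$ having a side on the boundary of $[0,1]^2$. Defects: for $\mathbf{x}\in\Delta$, $D^Q_\nearrow(\mathbf{x})$, $D^Q_\swarrow(\mathbf{x})$ are the minima of $V_Q(R)$ over (possibly degenerate) rectangles with corners in $\Delta$ having $\mathbf{x}$ as southwest, respectively northeast, corner; $D^Q_M=\min(D^Q_\nearrow,D^Q_\swarrow)$ and $Q_M=Q-D^Q_M$. Discrete imprecise copula: pair $(A,B)$ on $\Delta$, both grounded with neutral element 1, such that for every rectangle with corners in $\Delta$ and SW, SE, NE, NW corners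 $\mathbf{a},\mathbf{b},\mathbf{c},\mathbf{d}$: $A(\mathbf{a})+B(\mathbf{c})-A(\mathbf{b})-A(\mathbf{d})\ge0$, $B(\mathbf{a})+A(\mathbf{c})-A(\mathbf{b})-A(\mathbf{d})\ge0$, $B(\mathbf{a})+B(\mathbf{c})-B(\mathbf{b})-A(\mathbf{d})\ge0$, $B(\mathbf{a})+B(\mathbf{c})-A(\mathbf{b})-B(\mathbf{d})\ge0$; the imprecise copula on $[0,1]^2$ is defined identically with points in $[0,1]^2$. Copula on $[0,1]^2$: grounded, neutral element 1, $V_C\ge0$ on all rectangles. $Q^{\mathrm{BL}}$ is the function on $[0,1]^2$ equal on each cell $[\frac{i-1}{10},\frac{i}{10}]\times[\frac{j-1}{10},\frac{j}{10}]$ to the bilinear interpolation (affine in each variable separately) of the corner values of $Q$. *)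

From Stdlib Require Import Reals Lra List ZArith Arith.
Import ListNotations.
Open Scope R_scope.

(* A function on the mesh Delta = {0,1/10,...,1}^2 is encoded as
   Q : nat -> nat -> R, where Q i j stands for Q(i/10, j/10); only
   indices i, j <= 10 are meaningful. *)
Definition meshfun := nat -> nat -> R.

Definition Vd (Q : meshfun) (i1 i2 j1 j2 : nat) : R :=
  Q i1 j1 + Q i2 j2 - Q i2 j1 - Q i1 j2.

Definition d_grounded (Q : meshfun) : Prop :=
  forall i, (i <= 10)%nat -> Q i 0%nat = 0 /\ Q 0%nat i = 0.

Definition d_neutral (Q : meshfun) : Prop :=
  forall i, (i <= 10)%nat -> Q i 10%nat = INR i / 10 /\ Q 10%nat i = INR i / 10.

Definition discrete_copula (Q : meshfun) : Prop :=
  d_grounded Q /\ d_neutral Q /\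
  forall i1 i2 j1 j2, (i1 <= i2 <= 10)%nat -> (j1 <= j2 <= 10)%nat ->
    0 <= Vd Q i1 i2 j1 j2.

Definition discrete_quasi_copula (Q : meshfun) : Prop :=
  d_grounded Q /\ d_neutral Q /\
  forall i1 i2 j1 j2, (i1 <= i2 <= 10)%nat -> (j1 <= j2 <= 10)%nat ->
    (i1 = 0%nat \/ i2 = 10%nat \/ j1 = 0%nat \/ j2 = 10%nat) ->
    0 <= Vd Q i1 i2 j1 j2.

Definition minl (x : R) (l : list R) : R := fold_right Rmin x l.

(* D_nearrow(i,j): min of V_Q over rectangles with SW corner (i,j);
   the list starts with the degenerate rectangle (value 0). *)
Definition D_ne (Q : meshfun) (i j : nat) : R :=
  minl (Vd Q i i j j)
    (map (fun p => Vd Q i (fst p) j (snd p))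
         (list_prod (seq i (11 - i)) (seq j (11 - j)))).

Definition D_sw (Q : meshfun) (i j : nat) : R :=
  minl (Vd Q i i j j)
    (map (fun p => Vd Q (fst p) i (snd p) j)
         (list_prod (seq 0 (S i)) (seq 0 (S j)))).

Definition D_M (Q : meshfun) (i j : nat) : R := Rmin (D_ne Q i j) (D_sw Q i j).

Definition Q_M (Q : meshfun) : meshfun := fun i j => Q i j - D_M Q i j.

(* the four imprecise-copula inequalities for a rectangle with
   corners a=SW, b=SE, c=NE, d=NW given by their values *)
Definition imprecise_ineqs (Aa Ab Ac Ad Ba Bb Bc Bd : R) : Prop :=
  0 <= Aa + Bc - Ab - Ad /\
  0 <= Ba + Ac - Ab - Ad /\
  0 <= Ba + Bc - Bb - Ad /\
  0 <= Ba + Bc - Ab - Bd.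

Definition discrete_imprecise_copula (A B : meshfun) : Prop :=
  d_grounded A /\ d_neutral A /\ d_grounded B /\ d_neutral B /\
  forall i1 i2 j1 j2, (i1 <= i2 <= 10)%nat -> (j1 <= j2 <= 10)%nat ->
    imprecise_ineqs (A i1 j1) (A i2 j1) (A i2 j2) (A i1 j2)
                    (B i1 j1) (B i2 j1) (B i2 j2) (B i1 j2).

Definition unitI (s : R) : Prop := 0 <= s <= 1.

Definition grounded (C : R -> R -> R) : Prop :=
  forall s, unitI s -> C s 0 = 0 /\ C 0 s = 0.

Definition neutral (C : R -> R -> R) : Prop :=
  forall s, unitI s -> C s 1 = s /\ C 1 s = s.

Definition Vc (C : R -> R -> R) (s1 s2 t1 t2 : R) : R :=
  C s1 t1 + C s2 t2 - C s2 t1 - C s1 t2.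

Definition copula (C : R -> R -> R) : Prop :=
  grounded C /\ neutral C /\
  forall s1 s2 t1 t2, 0 <= s1 -> s1 <= s2 -> s2 <= 1 ->
    0 <= t1 -> t1 <= t2 -> t2 <= 1 -> 0 <= Vc C s1 s2 t1 t2.

Definition imprecise_copula (A B : R -> R -> R) : Prop :=
  grounded A /\ neutral A /\ grounded B /\ neutral B /\
  forall s1 s2 t1 t2, 0 <= s1 -> s1 <= s2 -> s2 <= 1 ->
    0 <= t1 -> t1 <= t2 -> t2 <= 1 ->
    imprecise_ineqs (A s1 t1) (A s2 t1) (A s2 t2) (A s1 t2)
                    (B s1 t1) (B s2 t1) (B s2 t2) (B s1 t2).

(* index k of the cell [k/10,(k+1)/10] (k = 0..9) containing s in [0,1];
   at interior mesh points either adjacent cell gives the same value. *)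
Definition cell (s : R) : nat := Nat.min 9 (Z.to_nat (Int_part (10 * s))).

Definition BL (Q : meshfun) (s t : R) : R :=
  let i := cell s in let j := cell t in
  let u := 10 * s - INR i in let v := 10 * t - INR j in
  (1 - u) * (1 - v) * Q i j + u * (1 - v) * Q (S i) j
  + (1 - u) * v * Q i (S j) + u * v * Q (S i) (S j).

Definition rowsA : list (list Z) := [
  [0;0;0;0;0;0;0;0;0;0;0];
  [0;0;1;2;3;4;5;5;5;5;5];
  [0;1;2;3;3;4;5;10;10;10;10];
  [0;2;2;5;7;7;8;13;15;15;15];
  [0;3;3;6;7;7;8;13;18;20;20];
  [0;4;4;6;9;11;11;16;21;25;25];
  [0;5;5;7;9;11;11;16;21;26;30];
  [0;5;10;12;14;16;16;21;26;31;35];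
  [0;5;10;15;19;21;21;26;31;36;40];
  [0;5;10;15;20;25;26;31;36;41;45];
  [0;5;10;15;20;25;30;35;40;45;50]]%Z.

Definition rowsB : list (list Z) := [
  [0;0;0;0;0;0;0;0;0;0;0];
  [0;1;2;3;4;5;5;5;5;5;5];
  [0;2;2;3;4;5;6;10;10;10;10];
  [0;3;3;6;7;8;9;14;15;15;15];
  [0;4;4;6;8;8;9;14;18;20;20];
  [0;5;5;7;9;11;12;17;22;25;25];
  [0;5;6;8;10;12;12;17;22;26;30];
  [0;5;10;13;15;17;17;22;27;31;35];
  [0;5;10;15;19;21;22;27;32;36;40];
  [0;5;10;15;20;25;26;31;36;41;45];
  [0;5;10;15;20;25;30;35;40;45;50]]%Z.

(* <A>(j/10,k/10) = [A]_{j+1,k+1} (0-based: row j, column k) *)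
Definition mA : meshfun := fun j k => IZR (nth k (nth j rowsA nil) 0%Z) / 50.
Definition mB : meshfun := fun j k => IZR (nth k (nth j rowsB nil) 0%Z) / 50.

(* A function of an ordered pair x <= y that is
      cellwise affine in each variable is nonnegative once it is so at pairs
      of nodes and on the diagonal; applied twice, this extends every mixed
      rectangle inequality X(a) + Y(c) - Z(b) - W(d) >= 0 from the mesh to
      [0,1]^2.  Hence BL maps discrete imprecise copulas to imprecise
      copulas, and a copula between BL Q1 and BL Q2 restricts to a discrete
      copula between Q1 and Q2.
   2. The concrete matrices.  Their values lie in (1/50)Z, so the finitely
      many defining conditions (quasi-copula, <B> = <A>_M, imprecise copula)
      are decided by computation on the integer numerators.
   3. The obstruction.  Summing V_C >= 0 over seven rectangles tiling
      [1,6]^2 minus two blocks (in mesh units) forces an alternating sum of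
      twelve values of C to be nonnegative, while the bounds <A> <= C <= <B>
      make it at most 35/50 - 36/50 < 0.  *)

From Stdlib Require Import Reals Lra Lia List ZArith Bool.
Open Scope R_scope.

Local Notation node k := (INR k / 10).
Local Notation in_cell k x := (INR k <= 10 * x <= INR k + 1).

Lemma INR_10 : INR 10 = 10.
Proof. simpl; ring. Qed.

Lemma node_unit k : (k <= 10)%nat -> 0 <= node k <= 1.
Proof. intros Hk; apply le_INR in Hk; rewrite INR_10 in Hk; pose proof (pos_INR k); lra. Qed.

Lemma node_le a b : (a <= b)%nat -> node a <= node b.
Proof. intros H; apply le_INR in H; lra. Qed.

Lemma node_le_inv a b : node a <= node b -> (a <= b)%nat.
Proof. intros H; apply INR_le; lra. Qed.

Lemma node0 : node 0 = 0.
Proof. simpl; field. Qed.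

Lemma node10 : node 10 = 1.
Proof. rewrite INR_10; field. Qed.

Lemma cell_spec s : 0 <= s <= 1 -> (cell s <= 9)%nat /\ in_cell (cell s) s.
Proof.
  intros Hs; unfold cell.
  destruct (base_Int_part (10 * s)) as [H1 H2].
  set (z := Int_part (10 * s)) in *.
  assert (Hz0 : (-1 < z)%Z) by (apply lt_IZR; lra).
  assert (Hz1 : (z <= 10)%Z) by (apply le_IZR; lra).
  destruct (Nat.min_spec 9 (Z.to_nat z)) as [[Hlt ->]|[Hge ->]].
  - assert (z = 10%Z) as Hz by lia; rewrite Hz in H1; split; [lia|simpl; lra].
  - split; [exact Hge|]; rewrite INR_IZR_INZ, Z2Nat.id by lia; lra.
Qed.

Lemma in_cell_unit k x : (k <= 9)%nat -> in_cell k x -> 0 <= x <= 1.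
Proof.
  intros Hk Hx; apply le_INR in Hk; pose proof (pos_INR k).
  replace (INR 9) with 9 in Hk by (simpl; ring); lra.
Qed.

Lemma cells_at_point k k' x : in_cell k x -> in_cell k' x ->
  k = k' \/ (k' = S k /\ 10 * x = INR k') \/ (k = S k' /\ 10 * x = INR k).
Proof.
  intros H H'.
  assert (k' <= S k)%nat by (apply INR_le; rewrite S_INR; lra).
  assert (k <= S k')%nat by (apply INR_le; rewrite S_INR; lra).
  destruct (Nat.eq_dec k k') as [e|ne]; [now left|right].
  assert (Hd : (k' = S k \/ k = S k')%nat) by lia.
  destruct Hd as [->| ->]; rewrite S_INR in *; [left|right]; split; auto; lra.
Qed.

Definition bilin (Q : meshfun) (k l : nat) (s t : R) : R :=
  let u := 10 * s - INR k in let v := 10 * t - INR l in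
  (1 - u) * (1 - v) * Q k l + u * (1 - v) * Q (S k) l
  + (1 - u) * v * Q k (S l) + u * v * Q (S k) (S l).

(* On a common edge the interpolations from the two adjacent cells agree,
   so BL Q may be computed from any cell containing the point. *)
Lemma BL_on_cell Q s t k l : (k <= 9)%nat -> (l <= 9)%nat ->
  in_cell k s -> in_cell l t -> BL Q s t = bilin Q k l s t.
Proof.
  intros Hk Hl Hs Ht.
  destruct (cell_spec s (in_cell_unit k s Hk Hs)) as [_ Cs].
  destruct (cell_spec t (in_cell_unit l t Hl Ht)) as [_ Ct].
  change (BL Q s t) with (bilin Q (cell s) (cell t) s t).
  destruct (cells_at_point _ _ _ Cs Hs) as [<-|[[-> E]|[-> E]]];
  destruct (cells_at_point _ _ _ Ct Ht) as [<-|[[-> F]|[-> F]]];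
  unfold bilin; rewrite ?S_INR in *; rewrite ?E, ?F; ring.
Qed.

Lemma BL_node Q i j : (i <= 10)%nat -> (j <= 10)%nat -> BL Q (node i) (node j) = Q i j.
Proof.
  assert (Hnode : forall k, (k <= 10)%nat -> exists k', (k' <= 9)%nat /\
    in_cell k' (node k) /\ ((k = k' /\ 10 * node k = INR k') \/ (k = S k' /\ 10 * node k = INR k' + 1))).
  { intros k Hk; destruct (Nat.eq_dec k 10) as [->|ne].
    - exists 9%nat; rewrite INR_10; replace (INR 9) with 9 by (simpl; ring).
      split; [lia|split; [lra|right; split; [reflexivity|lra]]].
    - exists k; split; [lia|split; [lra|left; split; [reflexivity|lra]]]. }
  intros Hi Hj.
  destruct (Hnode i Hi) as [k [Hk [Ck [[-> E]|[-> E]]]]];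
  destruct (Hnode j Hj) as [l [Hl [Cl [[-> F]|[-> F]]]]];
  rewrite (BL_on_cell Q _ _ k l Hk Hl Ck Cl); unfold bilin; rewrite E, F; ring.
Qed.

(* Groundedness and the neutral element pass from Q to BL Q, since BL Q is
   affine along the edges of [0,1]^2 between nodes where it equals Q. *)
Lemma BL_grounded_neutral Q : d_grounded Q -> d_neutral Q -> grounded (BL Q) /\ neutral (BL Q).
Proof.
  intros Hg Hn; split; intros s Hs; destruct (cell_spec s Hs) as [Hk Cs];
  set (k := cell s) in *; assert (Hk1 : (S k <= 10)%nat) by lia.
  - assert (C0 : in_cell 0 0) by (simpl; lra).
    rewrite (BL_on_cell Q s 0 k 0 Hk ltac:(lia) Cs C0), (BL_on_cell Q 0 s 0 k ltac:(lia) Hk C0 Cs).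
    unfold bilin; simpl INR.
    destruct (Hg k ltac:(lia)) as [-> ->]; destruct (Hg (S k) Hk1) as [-> ->]; split; ring.
  - assert (C9 : in_cell 9 1) by (replace (INR 9) with 9 by (simpl; ring); lra).
    rewrite (BL_on_cell Q s 1 k 9 Hk ltac:(lia) Cs C9), (BL_on_cell Q 1 s 9 k ltac:(lia) Hk C9 Cs).
    unfold bilin; replace (INR 9) with 9 by (simpl; ring).
    destruct (Hn k ltac:(lia)) as [-> ->]; destruct (Hn (S k) Hk1) as [-> ->].
    rewrite S_INR; split; field.
Qed.

Definition mesh_le (Q Q' : meshfun) : Prop :=
  forall i j, (i <= 10)%nat -> (j <= 10)%nat -> Q i j <= Q' i j.

(* BL is monotone: bilinear interpolation has nonnegative weights. *)
Lemma BL_monotone Q Q' : mesh_le Q Q' ->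
  forall s t, 0 <= s <= 1 -> 0 <= t <= 1 -> BL Q s t <= BL Q' s t.
Proof.
  intros HQ s t Hs Ht.
  destruct (cell_spec s Hs) as [Hk Cs]; destruct (cell_spec t Ht) as [Hl Ct].
  change (bilin Q (cell s) (cell t) s t <= bilin Q' (cell s) (cell t) s t).
  set (k := cell s) in *; set (l := cell t) in *; unfold bilin.
  set (u := 10 * s - INR k); set (v := 10 * t - INR l).
  assert (0 <= (1 - u) * (1 - v)) by (apply Rmult_le_pos; unfold u, v; lra).
  assert (0 <= u * (1 - v)) by (apply Rmult_le_pos; unfold u, v; lra).
  assert (0 <= (1 - u) * v) by (apply Rmult_le_pos; unfold u, v; lra).
  assert (0 <= u * v) by (apply Rmult_le_pos; unfold u, v; lra).
  pose proof (HQ k l ltac:(lia) ltac:(lia)); pose proof (HQ (S k) l ltac:(lia) ltac:(lia)).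
  pose proof (HQ k (S l) ltac:(lia) ltac:(lia)); pose proof (HQ (S k) (S l) ltac:(lia) ltac:(lia)).
  nra.
Qed.

Definition cellwise_affine (g : R -> R) : Prop :=
  forall k x y l, (k <= 9)%nat -> in_cell k x -> in_cell k y -> 0 <= l <= 1 ->
    g ((1 - l) * x + l * y) = (1 - l) * g x + l * g y.

Lemma in_cell_convex k x y l : in_cell k x -> in_cell k y -> 0 <= l <= 1 ->
  in_cell k ((1 - l) * x + l * y).
Proof. intros; nra. Qed.

Lemma BL_affine_s Q t : 0 <= t <= 1 -> cellwise_affine (fun s => BL Q s t).
Proof.
  intros Ht k x y l Hk Hx Hy Hl; destruct (cell_spec t Ht) as [Hc Ct].
  rewrite !(BL_on_cell Q _ t k (cell t) Hk Hc) by auto using in_cell_convex.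
  unfold bilin; ring.
Qed.

Lemma BL_affine_t Q s : 0 <= s <= 1 -> cellwise_affine (fun t => BL Q s t).
Proof.
  intros Hs k x y l Hk Hx Hy Hl; destruct (cell_spec s Hs) as [Hc Cs].
  rewrite !(BL_on_cell Q s _ (cell s) k Hc Hk) by auto using in_cell_convex.
  unfold bilin; ring.
Qed.

Lemma cellwise_affine_combine f1 f2 f3 f4 :
  cellwise_affine f1 -> cellwise_affine f2 -> cellwise_affine f3 -> cellwise_affine f4 ->
  cellwise_affine (fun x => f1 x + f2 x - f3 x - f4 x).
Proof.
  intros H1 H2 H3 H4 k x y l Hk Hx Hy Hl.
  rewrite (H1 k x y l), (H2 k x y l), (H3 k x y l), (H4 k x y l) by assumption; ring.
Qed.

Lemma cellwise_affine_const c : cellwise_affine (fun _ => c).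
Proof. intros k x y l _ _ _ _; ring. Qed.

(* A cellwise affine function that is nonnegative at the endpoints of
   [a,b] and at the nodes inside it is nonnegative on [a,b]: on each cell
   it interpolates linearly between two such points. *)
Lemma cellwise_affine_nonneg g a b : cellwise_affine g -> 0 <= a -> b <= 1 ->
  (forall k, (k <= 10)%nat -> a <= node k <= b -> 0 <= g (node k)) ->
  0 <= g a -> 0 <= g b -> forall x, a <= x <= b -> 0 <= g x.
Proof.
  intros Hg Ha Hb Hnode Hga Hgb x Hx.
  destruct (cell_spec x ltac:(lra)) as [Hk Cx]; set (k := cell x) in *.
  pose proof (S_INR k) as ES.
  set (lo := Rmax a (node k)); set (hi := Rmin b (node (S k))).
  assert (Glo : 0 <= g lo /\ lo <= x /\ INR k <= 10 * lo).
  { unfold lo; destruct (Rle_dec a (node k)).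
    - rewrite Rmax_right by lra; split; [apply Hnode|]; lra || lia.
    - rewrite Rmax_left by lra; lra. }
  assert (Ghi : 0 <= g hi /\ x <= hi /\ 10 * hi <= INR k + 1).
  { unfold hi; destruct (Rle_dec b (node (S k))).
    - rewrite Rmin_left by lra; lra.
    - rewrite Rmin_right by lra; split; [apply Hnode|]; lra || lia. }
  destruct (Req_dec lo hi) as [e|ne]; [replace x with lo by lra; tauto|].
  set (l := (x - lo) / (hi - lo)).
  assert (El : l * (hi - lo) = x - lo) by (unfold l; field; lra).
  assert (Hl : 0 <= l <= 1) by nra.
  replace x with ((1 - l) * lo + l * hi) by nra.
  rewrite (Hg k lo hi l Hk ltac:(lra) ltac:(lra) Hl); nra.
Qed.

Lemma ordered_pair_nonneg (f : R -> R -> R) :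
  (forall y, 0 <= y <= 1 -> cellwise_affine (fun x => f x y)) ->
  (forall x, 0 <= x <= 1 -> cellwise_affine (fun y => f x y)) ->
  (forall x, 0 <= x <= 1 -> 0 <= f x x) ->
  (forall i j, (i <= j <= 10)%nat -> 0 <= f (node i) (node j)) ->
  forall x y, 0 <= x -> x <= y -> y <= 1 -> 0 <= f x y.
Proof.
  intros Hx Hy Hdiag Hnodes.
  assert (Hnode_y : forall j, (j <= 10)%nat -> forall x, 0 <= x <= node j -> 0 <= f x (node j)).
  { intros j Hj; pose proof (node_unit j Hj).
    apply (cellwise_affine_nonneg (fun x => f x (node j))); try apply Hx; try lra.
    - intros i Hi [_ Hij]; apply Hnodes; apply node_le_inv in Hij; lia.
    - pose proof (Hnodes 0%nat j ltac:(lia)) as h; rewrite node0 in h; exact h.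
    - apply Hnodes; lia. }
  intros x y H0x Hxy Hy1.
  apply (cellwise_affine_nonneg (fun y => f x y) x 1); try apply Hy; try lra.
  - intros j Hj Hxj; apply Hnode_y; lra || lia.
  - apply Hdiag; lra.
  - pose proof (Hnode_y 10%nat ltac:(lia) x) as h; rewrite node10 in h; apply h; lra.
Qed.

(* Extension of a "mixed" rectangle inequality X(a) + Y(c) - Z(b) - W(d) >= 0
   from the mesh to [0,1]^2.  The order hypotheses make it hold on degenerate
   rectangles, which anchors the reduction to nodes. *)
Lemma BL_rectangle_nonneg (X Y Z W : meshfun) :
  mesh_le Z X -> mesh_le W X -> mesh_le Z Y -> mesh_le W Y ->
  (forall i1 i2 j1 j2, (i1 <= i2 <= 10)%nat -> (j1 <= j2 <= 10)%nat ->
     0 <= X i1 j1 + Y i2 j2 - Z i2 j1 - W i1 j2) ->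
  forall s1 s2 t1 t2, 0 <= s1 -> s1 <= s2 -> s2 <= 1 -> 0 <= t1 -> t1 <= t2 -> t2 <= 1 ->
    0 <= BL X s1 t1 + BL Y s2 t2 - BL Z s2 t1 - BL W s1 t2.
Proof.
  intros ZX WX ZY WY Hmesh.
  assert (Hnode_s : forall i1 i2, (i1 <= i2 <= 10)%nat ->
            forall t1 t2, 0 <= t1 -> t1 <= t2 -> t2 <= 1 ->
            0 <= BL X (node i1) t1 + BL Y (node i2) t2 - BL Z (node i2) t1 - BL W (node i1) t2).
  { intros i1 i2 Hi; pose proof (node_unit i1 ltac:(lia)); pose proof (node_unit i2 ltac:(lia)).
    apply ordered_pair_nonneg.
    1, 2: intros t Ht; apply cellwise_affine_combine;
      first [apply BL_affine_t; lra | apply cellwise_affine_const].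
    - intros t Ht; pose proof (BL_monotone W X WX (node i1) t);
        pose proof (BL_monotone Z Y ZY (node i2) t); lra.
    - intros j1 j2 Hj; rewrite !BL_node by lia; apply Hmesh; lia. }
  intros s1 s2 t1 t2 H0s1 Hs12 Hs2 H0t1 Ht12 Ht2.
  apply (ordered_pair_nonneg (fun s1 s2 => BL X s1 t1 + BL Y s2 t2 - BL Z s2 t1 - BL W s1 t2));
    try lra.
  1, 2: intros s Hs; apply cellwise_affine_combine;
    first [apply BL_affine_s; lra | apply cellwise_affine_const].
  - intros s Hs; pose proof (BL_monotone Z X ZX s t1); pose proof (BL_monotone W Y WY s t2); lra.
  - intros i1 i2 Hi; apply Hnode_s; lra || lia.
Qed.

(* The bilinear extension of a discrete imprecise copula is an imprecise
   copula.  A <= B at the nodes comes from the degenerate rectangles. *)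
Lemma BL_imprecise_copula A B : discrete_imprecise_copula A B -> imprecise_copula (BL A) (BL B).
Proof.
  intros (GA & NA & GB & NB & Hrect).
  assert (AB : mesh_le A B).
  { intros i j Hi Hj; destruct (Hrect i i j j ltac:(lia) ltac:(lia)) as [H _]; lra. }
  assert (AA : mesh_le A A) by (intros i j _ _; lra).
  assert (BB : mesh_le B B) by (intros i j _ _; lra).
  destruct (BL_grounded_neutral A GA NA) as [GA' NA'].
  destruct (BL_grounded_neutral B GB NB) as [GB' NB'].
  do 4 (split; [assumption|]).
  intros s1 s2 t1 t2 ? ? ? ? ? ?; repeat split.
  all: apply BL_rectangle_nonneg; try assumption;
    intros i1 i2 j1 j2 Hi Hj; apply (Hrect i1 i2 j1 j2 Hi Hj).
Qed.

Lemma copula_restrict Q1 Q2 (C : R -> R -> R) : copula C ->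
  (forall s t, unitI s -> unitI t -> BL Q1 s t <= C s t <= BL Q2 s t) ->
  discrete_copula (fun i j => C (node i) (node j)) /\
  (forall i j, (i <= 10)%nat -> (j <= 10)%nat ->
     Q1 i j <= C (node i) (node j) <= Q2 i j).
Proof.
  intros (Gc & Nc & Vc_nonneg) Hbetween; split; [split; [|split]|].
  - intros i Hi; rewrite node0; apply Gc, node_unit, Hi.
  - intros i Hi; rewrite node10; apply Nc, node_unit, Hi.
  - intros i1 i2 j1 j2 Hi Hj.
    pose proof (node_unit i1 ltac:(lia)); pose proof (node_unit i2 ltac:(lia)).
    pose proof (node_unit j1 ltac:(lia)); pose proof (node_unit j2 ltac:(lia)).
    pose proof (node_le i1 i2 ltac:(lia)); pose proof (node_le j1 j2 ltac:(lia)).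
    apply Vc_nonneg; lra.
  - intros i j Hi Hj; rewrite <- (BL_node Q1 i j Hi Hj), <- (BL_node Q2 i j Hi Hj).
    apply Hbetween; apply node_unit; assumption.
Qed.

(* Mesh functions with values in (1/50)Z, given by their integer numerators;
   this is how <A> and <B> are defined, and it makes their finitely many
   defining conditions decidable by computation. *)
Definition scaled (g : nat -> nat -> Z) : meshfun := fun i j => IZR (g i j) / 50.

Definition gA (i j : nat) : Z := nth j (nth i rowsA nil) 0%Z.
Definition gB (i j : nat) : Z := nth j (nth i rowsB nil) 0%Z.

Lemma mA_scaled : mA = scaled gA. Proof. reflexivity. Qed.
Lemma mB_scaled : mB = scaled gB. Proof. reflexivity. Qed.

Definition all_nodes (P : nat -> bool) : bool := forallb P (seq 0 11).

Definition all_rects (P : nat -> nat -> nat -> nat -> bool) : bool :=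
  all_nodes (fun i1 => forallb (fun i2 =>
    all_nodes (fun j1 => forallb (fun j2 => P i1 i2 j1 j2) (seq j1 (11 - j1))))
    (seq i1 (11 - i1))).

Lemma all_nodesP P : all_nodes P = true -> forall i, (i <= 10)%nat -> P i = true.
Proof. intros H i Hi; apply (proj1 (forallb_forall _ _) H), in_seq; lia. Qed.

Lemma all_rectsP P : all_rects P = true ->
  forall i1 i2 j1 j2, (i1 <= i2 <= 10)%nat -> (j1 <= j2 <= 10)%nat -> P i1 i2 j1 j2 = true.
Proof.
  intros H i1 i2 j1 j2 Hi Hj.
  pose proof (all_nodesP _ H i1 ltac:(lia)) as H1.
  pose proof (proj1 (forallb_forall _ _) H1 i2 ltac:(apply in_seq; lia)) as H2.
  pose proof (all_nodesP _ H2 j1 ltac:(lia)) as H3.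
  exact (proj1 (forallb_forall _ _) H3 j2 ltac:(apply in_seq; lia)).
Qed.

Definition zV (g : nat -> nat -> Z) (i1 i2 j1 j2 : nat) : Z :=
  (g i1 j1 + g i2 j2 - g i2 j1 - g i1 j2)%Z.

Lemma Vd_scaled g i1 i2 j1 j2 : Vd (scaled g) i1 i2 j1 j2 = IZR (zV g i1 i2 j1 j2) / 50.
Proof. unfold Vd, zV, scaled; rewrite !minus_IZR, !plus_IZR; field. Qed.

Lemma scaled_nonneg z : (0 <=? z)%Z = true -> 0 <= IZR z / 50.
Proof. intros H; apply Z.leb_le, IZR_le in H; lra. Qed.

Lemma Rmin_scaled x y : Rmin (IZR x / 50) (IZR y / 50) = IZR (Z.min x y) / 50.
Proof.
  destruct (Z.min_spec x y) as [[H ->]|[H ->]]; [apply Rmin_left|apply Rmin_right];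
  [apply IZR_lt in H|apply IZR_le in H]; lra.
Qed.

Lemma minl_scaled {X : Type} x (f : X -> Z) (F : X -> R) l :
  (forall p, F p = IZR (f p) / 50) ->
  minl (IZR x / 50) (map F l) = IZR (fold_right Z.min x (map f l)) / 50.
Proof.
  intros HF; induction l as [|a l IH]; [reflexivity|].
  unfold minl in *; simpl; rewrite IH, HF; apply Rmin_scaled.
Qed.

Definition zD_ne (g : nat -> nat -> Z) (i j : nat) : Z :=
  fold_right Z.min (zV g i i j j)
    (map (fun p => zV g i (fst p) j (snd p)) (list_prod (seq i (11 - i)) (seq j (11 - j)))).

Definition zD_sw (g : nat -> nat -> Z) (i j : nat) : Z :=
  fold_right Z.min (zV g i i j j)
    (map (fun p => zV g (fst p) i (snd p) j) (list_prod (seq 0 (S i)) (seq 0 (S j)))).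

Lemma Q_M_scaled g i j :
  Q_M (scaled g) i j = IZR (g i j - Z.min (zD_ne g i j) (zD_sw g i j)) / 50.
Proof.
  unfold Q_M, D_M, D_ne, D_sw, zD_ne, zD_sw.
  rewrite Vd_scaled, !(minl_scaled _ _ _ _ (fun p => Vd_scaled _ _ _ _ _)), Rmin_scaled.
  unfold scaled; rewrite minus_IZR; field.
Qed.

Definition grounded_b (g : nat -> nat -> Z) : bool :=
  all_nodes (fun i => (g i 0%nat =? 0) && (g 0%nat i =? 0))%Z.

Definition neutral_b (g : nat -> nat -> Z) : bool :=
  all_nodes (fun i => (g i 10%nat =? 5 * Z.of_nat i) && (g 10%nat i =? 5 * Z.of_nat i))%Z.

Definition on_boundary (i1 i2 j1 j2 : nat) : bool :=
  ((i1 =? 0) || (i2 =? 10) || (j1 =? 0) || (j2 =? 10))%nat.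

Definition quasi_copula_b (g : nat -> nat -> Z) : bool :=
  all_rects (fun i1 i2 j1 j2 => implb (on_boundary i1 i2 j1 j2) (0 <=? zV g i1 i2 j1 j2)%Z).

Definition imprecise_ineqs_b (Aa Ab Ac Ad Ba Bb Bc Bd : Z) : bool :=
  ((0 <=? Aa + Bc - Ab - Ad) && (0 <=? Ba + Ac - Ab - Ad) &&
  (0 <=? Ba + Bc - Bb - Ad) && (0 <=? Ba + Bc - Ab - Bd))%Z.

Definition imprecise_copula_b (g h : nat -> nat -> Z) : bool :=
  all_rects (fun i1 i2 j1 j2 => imprecise_ineqs_b (g i1 j1) (g i2 j1) (g i2 j2) (g i1 j2)
                                                  (h i1 j1) (h i2 j1) (h i2 j2) (h i1 j2)).

Lemma scaled_grounded g : grounded_b g = true -> d_grounded (scaled g).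
Proof.
  intros H i Hi; pose proof (all_nodesP _ H i Hi) as E.
  apply andb_prop in E as [E1 E2]; apply Z.eqb_eq in E1, E2.
  unfold scaled; rewrite E1, E2; split; lra.
Qed.

Lemma scaled_neutral g : neutral_b g = true -> d_neutral (scaled g).
Proof.
  intros H i Hi; pose proof (all_nodesP _ H i Hi) as E.
  apply andb_prop in E as [E1 E2]; apply Z.eqb_eq in E1, E2.
  unfold scaled; rewrite E1, E2, mult_IZR, <- INR_IZR_INZ; split; field.
Qed.

Lemma scaled_quasi_copula g : grounded_b g = true -> neutral_b g = true ->
  quasi_copula_b g = true -> discrete_quasi_copula (scaled g).
Proof.
  intros Hg Hn Hq; split; [now apply scaled_grounded|split; [now apply scaled_neutral|]].
  intros i1 i2 j1 j2 Hi Hj Hbd; rewrite Vd_scaled; apply scaled_nonneg.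
  pose proof (all_rectsP _ Hq i1 i2 j1 j2 Hi Hj) as E; cbv beta in E.
  replace (on_boundary i1 i2 j1 j2) with true in E; [exact E|].
  unfold on_boundary; symmetry.
  destruct Hbd as [-> | [-> | [-> | ->]]]; rewrite ?Nat.eqb_refl, ?orb_true_r; reflexivity.
Qed.

Lemma scaled_imprecise_ineqs Aa Ab Ac Ad Ba Bb Bc Bd :
  imprecise_ineqs_b Aa Ab Ac Ad Ba Bb Bc Bd = true ->
  imprecise_ineqs (IZR Aa / 50) (IZR Ab / 50) (IZR Ac / 50) (IZR Ad / 50)
                  (IZR Ba / 50) (IZR Bb / 50) (IZR Bc / 50) (IZR Bd / 50).
Proof.
  unfold imprecise_ineqs_b; intros H.
  repeat rewrite andb_true_iff in H; destruct H as [[[E1 E2] E3] E4].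
  apply Z.leb_le, IZR_le in E1, E2, E3, E4; rewrite !minus_IZR, !plus_IZR in E1, E2, E3, E4.
  unfold imprecise_ineqs; lra.
Qed.

Lemma scaled_imprecise_copula g h : grounded_b g = true -> neutral_b g = true ->
  grounded_b h = true -> neutral_b h = true -> imprecise_copula_b g h = true ->
  discrete_imprecise_copula (scaled g) (scaled h).
Proof.
  intros Gg Ng Gh Nh Hi.
  do 4 (split; [auto using scaled_grounded, scaled_neutral|]).
  intros i1 i2 j1 j2 H1 H2; apply scaled_imprecise_ineqs, (all_rectsP _ Hi i1 i2 j1 j2 H1 H2).
Qed.

Lemma gA_grounded : grounded_b gA = true. Proof. vm_compute; reflexivity. Qed.
Lemma gA_neutral : neutral_b gA = true. Proof. vm_compute; reflexivity. Qed.
Lemma gB_grounded : grounded_b gB = true. Proof. vm_compute; reflexivity. Qed.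
Lemma gB_neutral : neutral_b gB = true. Proof. vm_compute; reflexivity. Qed.
Lemma gA_quasi_copula : quasi_copula_b gA = true. Proof. vm_compute; reflexivity. Qed.
Lemma gA_gB_imprecise : imprecise_copula_b gA gB = true. Proof. vm_compute; reflexivity. Qed.
Lemma gB_defect :
  all_nodes (fun i => all_nodes (fun j =>
    gB i j =? gA i j - Z.min (zD_ne gA i j) (zD_sw gA i j)))%Z = true.
Proof. vm_compute; reflexivity. Qed.

Lemma mA_quasi_copula : discrete_quasi_copula mA.
Proof. exact (scaled_quasi_copula gA gA_grounded gA_neutral gA_quasi_copula). Qed.

Lemma mB_is_Q_M : forall i j, (i <= 10)%nat -> (j <= 10)%nat -> mB i j = Q_M mA i j.
Proof.
  intros i j Hi Hj; rewrite mA_scaled, mB_scaled, Q_M_scaled.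
  pose proof (all_nodesP _ (all_nodesP _ gB_defect i Hi) j Hj) as E; cbv beta in E.
  apply Z.eqb_eq in E; unfold scaled; rewrite E; reflexivity.
Qed.

Lemma mA_mB_imprecise : discrete_imprecise_copula mA mB.
Proof.
  exact (scaled_imprecise_copula gA gB gA_grounded gA_neutral gB_grounded gB_neutral
           gA_gB_imprecise).
Qed.

(* The twelve nodes of the obstruction: the corners, with signs, of the
   region [1,6]^2 (in mesh units) minus the blocks [2,3]x[2,4], [4,5]x[3,5]. *)
Definition cross_positive (Q : meshfun) : R :=
  Q 1%nat 1%nat + Q 2%nat 4%nat + Q 3%nat 2%nat + Q 4%nat 5%nat + Q 5%nat 3%nat + Q 6%nat 6%nat.

Definition cross_negative (Q : meshfun) : R :=
  Q 1%nat 6%nat + Q 2%nat 2%nat + Q 3%nat 4%nat + Q 4%nat 3%nat + Q 5%nat 5%nat + Q 6%nat 1%nat.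

Lemma seven_rectangles (Q : meshfun) :
  Vd Q 1 2 1 6 + Vd Q 2 3 1 2 + Vd Q 2 3 4 6 + Vd Q 3 4 1 6
  + Vd Q 4 5 1 3 + Vd Q 4 5 5 6 + Vd Q 5 6 1 6
  = cross_positive Q - cross_negative Q.
Proof. unfold Vd, cross_positive, cross_negative; ring. Qed.

Lemma cross_dominance C : discrete_copula C -> cross_negative C <= cross_positive C.
Proof.
  intros (_ & _ & HV).
  assert (0 <= Vd C 1 2 1 6) by (apply HV; lia).
  assert (0 <= Vd C 2 3 1 2) by (apply HV; lia).
  assert (0 <= Vd C 2 3 4 6) by (apply HV; lia).
  assert (0 <= Vd C 3 4 1 6) by (apply HV; lia).
  assert (0 <= Vd C 4 5 1 3) by (apply HV; lia).
  assert (0 <= Vd C 4 5 5 6) by (apply HV; lia).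
  assert (0 <= Vd C 5 6 1 6) by (apply HV; lia).
  pose proof (seven_rectangles C); lra.
Qed.

Lemma cross_positive_monotone Q Q' : mesh_le Q Q' -> cross_positive Q <= cross_positive Q'.
Proof. intros H; unfold cross_positive; repeat apply Rplus_le_compat; apply H; lia. Qed.

Lemma cross_negative_monotone Q Q' : mesh_le Q Q' -> cross_negative Q <= cross_negative Q'.
Proof. intros H; unfold cross_negative; repeat apply Rplus_le_compat; apply H; lia. Qed.

Lemma no_discrete_copula_between : ~ (exists C : meshfun, discrete_copula C /\
  forall i j, (i <= 10)%nat -> (j <= 10)%nat -> mA i j <= C i j <= mB i j).
Proof.
  intros [C [HC Hbetween]].
  pose proof (cross_dominance C HC).
  pose proof (cross_negative_monotone mA C (fun i j Hi Hj => proj1 (Hbetween i j Hi Hj))).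
  pose proof (cross_positive_monotone C mB (fun i j Hi Hj => proj2 (Hbetween i j Hi Hj))).
  assert (cross_negative mA = 36 / 50) by (cbv [cross_negative mA rowsA nth]; field).
  assert (cross_positive mB = 35 / 50) by (cbv [cross_positive mB rowsB nth]; field).
  lra.
Qed.

Theorem mainTheorem17 :
  discrete_quasi_copula mA /\
  (forall i j, (i <= 10)%nat -> (j <= 10)%nat -> mB i j = Q_M mA i j) /\
  discrete_imprecise_copula mA mB /\
  ~ (exists C : meshfun, discrete_copula C /\
       forall i j, (i <= 10)%nat -> (j <= 10)%nat -> mA i j <= C i j <= mB i j) /\
  imprecise_copula (BL mA) (BL mB) /\
  ~ (exists C : R -> R -> R, copula C /\
       forall s t, unitI s -> unitI t -> BL mA s t <= C s t <= BL mB s t).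
Proof.
  split; [exact mA_quasi_copula|].
  split; [exact mB_is_Q_M|].
  split; [exact mA_mB_imprecise|].
  split; [exact no_discrete_copula_between|].
  split; [exact (BL_imprecise_copula mA mB mA_mB_imprecise)|].
  intros [C [HC Hbetween]]; apply no_discrete_copula_between.
  exact (ex_intro _ _ (copula_restrict mA mB C HC Hbetween)).
Qed.
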